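(* Let $\mathcal{R}$ be a left-connected rewriting system over a signature $\Sigma$, let $L_1$ and $L_2$ be the left-hand sides of two rules of $\mathcal{R}$, and let $(g_1,g_2\colon G\to L_1+L_2)$ be a gluing scheme yielding a pre-critical pair, with gluing $\epsilon\colon L_1+L_2\twoheadrightarrow S=\mathtt{coeq}(g_1,g_2)$ and interface $in(S)+out(S)\xrightarrow{[\subseteq,\subseteq]}S$. This pre-critical pair is a critical pair if and only if some hyperedge of $L_1$ is glued to some hyperedge of $L_2$.
   Context: A signature $\Sigma$ is a set of triples $(x,n,m)$ (label, arity, coarity). A $\Sigma$-hypergraph $G=(V,E,s,t,l)$ has finite sets $V$ (nodes), $E$ (hyperedges), maps $s,t\colon E\to V^*$ (lists of sources/targets) and a labelling $l\colon E\to\Sigma$ sending a hyperedge with $n$ sources and $m$ targets to some $(x,n,m)$. Morphisms preserve sources, targets and labels; they form the category $\mathbf{Hyp}_\Sigma$, where colimits are computed componentwise and monos/epis are injective/surjective on nodes and hyperedges. Composition is written $f;g$; $\iota_1,\iota_2$ are coprojections. A hypergraph is discrete if it has no hyperedges. A path is a list of hyperedges $[e_1,\dots,e_n]$ with some target of $e_k$ equal to a source of $e_{k+1}$ for each $k$; it goes from $v$ to $v'$ if $v$ is a source of $e_1$ and $v'$ a target of $e_n$; a cycle is a path with some source of $e_1$ a target of $e_n$. In-degree (out-degree) of a node $v$: number of pairs $(e,i)$ with $v$ the $i$-th target (source) of $e$; $in(H)$, $out(H)$: nodes of in-degree $0$, out-degree $0$. $H$ is ma (monogamous acyclic) if it has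 no cycle and all in- and out-degrees are $\le 1$. A cospan $I\to H\leftarrow O$ with $I,O$ discrete is an ma-cospan if $H$ is ma and the legs are mono with images $in(H)$ and $out(H)$. $H$ is strongly connected if for all $x\in in(H)$, $y\in out(H)$ there is a path from $x$ to $y$. A left-connected rule is a span $L\xleftarrow{[i_L,o_L]}K=I+O\xrightarrow{[i_R,o_R]}R$ with $I,O$ discrete, $I\to L\leftarrow O$ and $I\to R\leftarrow O$ ma-cospans, $[i_L,o_L]$ mono and $L$ strongly connected; a left-connected rewriting system is a finite set of such rules. A convex match is a mono $m\colon L\to G$ such that every path in $G$ between two nodes of $m(L)$ has all its hyperedges in $m(L)$. A derivation between ma-cospans $n\to G\leftarrow m$ and $n\to H\leftarrow m$ via a rule $L\leftarrow K\to R$ is given by a convex match $L\to G$, a hypergraph $C$ and a diagram $G\leftarrow C\to H$, $K\to C$, $R\to H$, $n+m\to C$ in which $K,L,C,G$ and $K,R,C,H$ are pushout squares (the left one a boundary complement, automatic for left-connected systems) and everything commutes with the interfaces; for left-connected systems mono matches are automatically convex and pushout complements exist uniquely. A pre-critical pair consists of two derivations, via rules $L_1\leftarrow K_1\to R_1$ and $L_2\leftarrow K_2\to R_2$ with pushout complements $C_1,C_2$, from a common ma-cospan $n\to S\leftarrow m$ with matches $m_1,m_2$ such that $[m_1,m_2]\colon L_1+L_2\to S$ is epi. It is parallel if there exist $g_1\colon L_1\to C_2$ and $g_2\colon L_2\to C_1$ with $g_1$ followed by $C_2\to S$ equal to $m_1$ and $g_2$ followed by $C_1\to S$ equal to $m_2$;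 it is a critical pair if it is not parallel. A gluing scheme for $L_1,L_2$ is a $\Sigma$-hypergraph $G$ with morphisms $g_1,g_2\colon G\to L_1+L_2$; its gluing is the coequaliser $\epsilon\colon L_1+L_2\to S=\mathtt{coeq}(g_1,g_2)$. Two nodes (or hyperedges) $x,x'$ of $L_1+L_2$ are glued if some node (hyperedge) $y$ of $G$ has $g_1(y)=x$, $g_2(y)=x'$. The gluing scheme yields a pre-critical pair if $\iota_1;\epsilon$ and $\iota_2;\epsilon$ are mono and $in(S)\xrightarrow{\subseteq}S\xleftarrow{\subseteq}out(S)$ is an ma-cospan; the pre-critical pair is then formed by the (unique) derivations from this ma-cospan with matches $\iota_1;\epsilon$ and $\iota_2;\epsilon$. *)

From Stdlib Require List.
From mathcomp Require Import all_boot.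
Set Warnings "-notation-overridden".
Set Implicit Arguments. Unset Strict Implicit. Unset Printing Implicit Defensive.

Record signature := Signature {
  slabel :> Type; sar : slabel -> nat; scoar : slabel -> nat }.

Section Hyp.
Variable Sg : signature.

Record hypergraph := Hypergraph {
  hV : finType; hE : finType;
  hsrc : hE -> seq hV; htgt : hE -> seq hV; hlab : hE -> slabel Sg;
  hsrc_size : forall e, size (hsrc e) = sar (hlab e);
  htgt_size : forall e, size (htgt e) = scoar (hlab e) }.

Record hom (G H : hypergraph) := Hom {
  fV : hV G -> hV H; fE : hE G -> hE H;
  fsrc : forall e, hsrc (fE e) = map fV (hsrc e);
  ftgt : forall e, htgt (fE e) = map fV (htgt e);
  flab : forall e, hlab (fE e) = hlab e }.

Definition hcomp (A B C : hypergraph) (f : hom A B) (g : hom B C) : hom A C.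
Proof.
refine (@Hom A C (fun v => fV g (fV f v)) (fun e => fE g (fE f e)) _ _ _).
- by move=> e; rewrite fsrc fsrc -map_comp.
- by move=> e; rewrite ftgt ftgt -map_comp.
- by move=> e; rewrite !flab.
Defined.

Definition heq (A B : hypergraph) (f g : hom A B) :=
  (forall v, fV f v = fV g v) /\ (forall e, fE f e = fE g e).

Definition mono (A B : hypergraph) (f : hom A B) :=
  injective (fV f) /\ injective (fE f).
Definition epi (A B : hypergraph) (f : hom A B) :=
  (forall y, exists x, fV f x = y) /\ (forall y, exists x, fE f x = y).

Definition discrete (G : hypergraph) := #|hE G| = 0.

Definition hcoprod (G H : hypergraph) : hypergraph.
Proof.
refine (@Hypergraph (hV G + hV H)%type (hE G + hE H)%type
  (fun e => match e with inl e => map inl (hsrc e) | inr e => map inr (hsrc e) end)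
  (fun e => match e with inl e => map inl (htgt e) | inr e => map inr (htgt e) end)
  (fun e => match e with inl e => hlab e | inr e => hlab e end) _ _).
- by case=> e; rewrite size_map hsrc_size.
- by case=> e; rewrite size_map htgt_size.
Defined.

Definition inj1 (G H : hypergraph) : hom G (hcoprod G H).
Proof. by refine (@Hom G (hcoprod G H) inl inl _ _ _). Defined.
Definition inj2 (G H : hypergraph) : hom H (hcoprod G H).
Proof. by refine (@Hom H (hcoprod G H) inr inr _ _ _). Defined.

Definition copair (G H X : hypergraph) (f : hom G X) (g : hom H X) :
  hom (hcoprod G H) X.
Proof.
refine (@Hom (hcoprod G H) X
  (fun v => match v with inl v => fV f v | inr v => fV g v end)
  (fun e => match e with inl e => fE f e | inr e => fE g e end) _ _ _).
- by case=> e /=; rewrite fsrc -map_comp.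
- by case=> e /=; rewrite ftgt -map_comp.
- by case=> e /=; rewrite flab.
Defined.

Definition is_pushout (A B C D : hypergraph) (a : hom A B) (b : hom A C)
  (c : hom B D) (d : hom C D) :=
  heq (hcomp a c) (hcomp b d) /\
  forall (X : hypergraph) (x : hom B X) (y : hom C X),
    heq (hcomp a x) (hcomp b y) ->
    exists h : hom D X, [/\ heq (hcomp c h) x, heq (hcomp d h) y &
      forall h' : hom D X, heq (hcomp c h') x -> heq (hcomp d h') y -> heq h h'].

Definition is_coeq (G A S : hypergraph) (f g : hom G A) (e : hom A S) :=
  heq (hcomp f e) (hcomp g e) /\
  forall (X : hypergraph) (x : hom A X), heq (hcomp f x) (hcomp g x) ->
    exists h : hom S X, heq (hcomp e h) x /\
      forall h' : hom S X, heq (hcomp e h') x -> heq h h'.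

Definition indeg (G : hypergraph) (v : hV G) := (\sum_(e : hE G) count_mem v (htgt e))%N.
Definition outdeg (G : hypergraph) (v : hV G) := (\sum_(e : hE G) count_mem v (hsrc e))%N.

Definition linked (G : hypergraph) (e e' : hE G) := has (fun v => v \in hsrc e') (htgt e).

Definition path_from_to (G : hypergraph) (v v' : hV G) (e : hE G) (es : seq (hE G)) :=
  [&& path (@linked G) e es, v \in hsrc e & v' \in htgt (last e es)].

Definition has_cycle (G : hypergraph) :=
  exists (e : hE G) es, path (@linked G) e es && has (fun v => v \in hsrc e) (htgt (last e es)).

Definition ma (G : hypergraph) :=
  ~ has_cycle G /\ forall v : hV G, (indeg v <= 1)%N /\ (outdeg v <= 1)%N.

Definition ma_cospan (I H O : hypergraph) (i : hom I H) (o : hom O H) :=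
  discrete I /\ discrete O /\ ma H /\ mono i /\ mono o /\
      (forall v, indeg v = 0%N <-> exists x, fV i x = v) /\
      (forall v, outdeg v = 0%N <-> exists x, fV o x = v).

Definition strongly_connected (H : hypergraph) :=
  forall x y : hV H, indeg x = 0%N -> outdeg y = 0%N ->
    exists e es, path_from_to x y e es.

(* rules L <-[iL,oL]- I+O -[iR,oR]-> R *)
Record rule := Rule {
  rL : hypergraph; rR : hypergraph; rI : hypergraph; rO : hypergraph;
  riL : hom rI rL; roL : hom rO rL; riR : hom rI rR; roR : hom rO rR }.

Definition rK (r : rule) := hcoprod (rI r) (rO r).

Definition left_connected_rule (r : rule) :=
  discrete (rI r) /\ discrete (rO r) /\ ma_cospan (riL r) (roL r) /\
      ma_cospan (riR r) (roR r) /\ mono (copair (riL r) (roL r)) /\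
      strongly_connected (rL r).

Definition left_connected_system (Rs : seq rule) :=
  forall r, List.In r Rs -> left_connected_rule r.

Definition convex_match (L G : hypergraph) (m : hom L G) :=
  mono m /\
  forall (u w : hV L) (e : hE G) es, path_from_to (fV m u) (fV m w) e es ->
    forall x, x \in e :: es -> exists d, fE m d = x.

Record derivation (N G M : hypergraph) (i : hom N G) (o : hom M G)
   (r : rule) (m : hom (rL r) G) := Derivation {
  dC : hypergraph; dH : hypergraph;
  dk : hom (rK r) dC; dc : hom dC G;
  dr : hom (rR r) dH; dh : hom dC dH;
  dnm : hom (hcoprod N M) dC;
  diH : hom N dH; doH : hom M dH }.

Definition is_derivation (N G M : hypergraph) (i : hom N G) (o : hom M G)
   (r : rule) (m : hom (rL r) G) (D : derivation i o m) :=
  convex_match m /\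
      is_pushout (copair (riL r) (roL r)) (dk D) m (dc D) /\
      is_pushout (copair (riR r) (roR r)) (dk D) (dr D) (dh D) /\
      heq (hcomp (dnm D) (dc D)) (copair i o) /\
      heq (hcomp (dnm D) (dh D)) (copair (diH D) (doH D)) /\
      ma_cospan (diH D) (doH D).

Section Pairs.
Variables (N S M : hypergraph) (i : hom N S) (o : hom M S) (r1 r2 : rule).
Variables (m1 : hom (rL r1) S) (m2 : hom (rL r2) S).

Definition pre_critical_pair (D1 : derivation i o m1) (D2 : derivation i o m2) :=
  [/\ ma_cospan i o, is_derivation D1, is_derivation D2 & epi (copair m1 m2)].

Definition parallel (D1 : derivation i o m1) (D2 : derivation i o m2) :=
  exists (g1 : hom (rL r1) (dC D2)) (g2 : hom (rL r2) (dC D1)),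
    heq (hcomp g1 (dc D2)) m1 /\ heq (hcomp g2 (dc D1)) m2.

Definition critical_pair (D1 : derivation i o m1) (D2 : derivation i o m2) :=
  pre_critical_pair D1 D2 /\ ~ parallel D1 D2.
End Pairs.

Definition subdiscrete (S : hypergraph) (P : pred (hV S)) : hypergraph.
Proof.
refine (@Hypergraph {v : hV S | P v} void (fun e => match e with end)
  (fun e => match e with end) (fun e => match e with end) _ _); by case.
Defined.

Definition incl (S : hypergraph) (P : pred (hV S)) : hom (subdiscrete P) S.
Proof. by refine (@Hom (subdiscrete P) S val (fun e => match e with end) _ _ _); case. Defined.

Definition in_nodes (S : hypergraph) : pred (hV S) := fun v => indeg v == 0%N.
Definition out_nodes (S : hypergraph) : pred (hV S) := fun v => outdeg v == 0%N.

Definition glued_E (G A : hypergraph) (g1 g2 : hom G A) (x x' : hE A) :=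
  exists y, fE g1 y = x /\ fE g2 y = x'.

Definition yields_pre_critical (L1 L2 S : hypergraph)
  (eps : hom (hcoprod L1 L2) S) :=
  [/\ mono (hcomp (inj1 L1 L2) eps), mono (hcomp (inj2 L1 L2) eps) &
      ma_cospan (@incl S (@in_nodes S)) (@incl S (@out_nodes S))].

End Hyp.

(* A coequaliser never separates glued hyperedges, and any boolean tag on the
   hyperedges of L1 + L2 that is invariant under the gluing factors through it.
   So if no hyperedge of L1 is glued to one of L2, the images of L1 and L2 in S
   share no hyperedge.  The image of L2 then also avoids the interior nodes of
   the match of L1: such a node has an incoming and an outgoing hyperedge inside
   the match, every node of L2 has some incident hyperedge (strong
   connectivity), and S has in- and out-degrees at most 1.  Hence L2 lands in
   the pushout complement C1, which sits injectively in S because K is discrete;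
   symmetrically for L1, so the pair is parallel.  Conversely, a hyperedge in
   both images cannot come from C2, since a pushout along a discrete K keeps the
   hyperedges of C2 and of L2 apart. *)

From mathcomp Require Import all_boot.
From Stdlib Require Import Classical.
Set Implicit Arguments. Unset Strict Implicit. Unset Printing Implicit Defensive.

Lemma sum_nat_le1_eq (T : finType) (F : T -> nat) (i j : T) :
  \sum_k F k <= 1 -> 0 < F i -> 0 < F j -> i = j.
Proof.
move=> Hle Fi Fj; apply/eqP; apply: contraTT Hle => Hij.
rewrite -ltnNge (bigD1 i) //= (bigD1 j) /=; last by rewrite eq_sym.
by rewrite addnA; apply/ltn_addr/(leq_add Fi Fj).
Qed.

Section Degrees.
Variables (Sg : signature) (S : hypergraph Sg).

Lemma indeg_eq0 (v : hV S) : (indeg v == 0) = [forall e, v \notin htgt e].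
Proof.
rewrite /indeg sum_nat_eq0; apply: eq_forallb => e.
by rewrite eqn0Ngt -has_count has_pred1.
Qed.

Lemma outdeg_eq0 (v : hV S) : (outdeg v == 0) = [forall e, v \notin hsrc e].
Proof.
rewrite /outdeg sum_nat_eq0; apply: eq_forallb => e.
by rewrite eqn0Ngt -has_count has_pred1.
Qed.

Lemma indeg_le1_tgt_eq (v : hV S) (e e' : hE S) :
  indeg v <= 1 -> v \in htgt e -> v \in htgt e' -> e = e'.
Proof. by move=> Hv He He'; apply: (sum_nat_le1_eq Hv); rewrite -has_count has_pred1. Qed.

Lemma outdeg_le1_src_eq (v : hV S) (e e' : hE S) :
  outdeg v <= 1 -> v \in hsrc e -> v \in hsrc e' -> e = e'.
Proof. by move=> Hv He He'; apply: (sum_nat_le1_eq Hv); rewrite -has_count has_pred1. Qed.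

Lemma strongly_connected_incident (v : hV S) : strongly_connected S ->
  [exists e, v \in htgt e] || [exists e, v \in hsrc e].
Proof.
move=> Hsc; apply/negPn/negP; rewrite negb_or !negb_exists => /andP [Hin Hout].
have Hin0 : indeg v = 0 by apply/eqP; rewrite indeg_eq0.
have Hout0 : outdeg v = 0 by apply/eqP; rewrite outdeg_eq0.
have [e [es /and3P [_ Hv _]]] := Hsc v v Hin0 Hout0.
by move/forallP: Hout => /(_ e); rewrite Hv.
Qed.

End Degrees.

Section Morphisms.
Variable Sg : signature.
Implicit Types A B C S X : hypergraph Sg.

Lemma heq_refl A B (f : hom A B) : heq f f.
Proof. by []. Qed.

Lemma heq_sym A B (f g : hom A B) : heq f g -> heq g f.
Proof. by case=> HV HE; split=> x. Qed.

Lemma heq_trans A B (f g h : hom A B) : heq f g -> heq g h -> heq f h.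
Proof. by case=> HV HE [HV' HE']; split=> x; [rewrite HV HV' | rewrite HE HE']. Qed.

Lemma heq_compr A B C (f g : hom A B) (h : hom B C) :
  heq f g -> heq (hcomp f h) (hcomp g h).
Proof. by case=> HV HE; split=> x /=; rewrite ?HV ?HE. Qed.

Lemma discrete_edge A : discrete A -> hE A -> False.
Proof. by move=> HA e; have := card0_eq HA e; rewrite inE. Qed.

Lemma discrete_coprod A B : discrete A -> discrete B -> discrete (hcoprod A B).
Proof. by rewrite /discrete /= card_sum => -> ->. Qed.

End Morphisms.

Section EpicSurjective.
Variables (Sg : signature) (A S : hypergraph Sg) (f : hom A S).

Let imV : pred (hV S) := fun v => [exists x, fV f x == v].
Let imE : pred (hE S) := fun e => [exists x, fE f x == e].

(* [mark true] and [mark false] agree exactly on the image of [f], so if [f]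
   is an epimorphism its image is everything. *)
Definition marked : hypergraph Sg.
Proof.
refine (@Hypergraph Sg (hV S * bool)%type (hE S * bool)%type
  (fun e => map (fun v => (v, imV v || e.2)) (hsrc e.1))
  (fun e => map (fun v => (v, imV v || e.2)) (htgt e.1))
  (fun e => hlab e.1) _ _) => e; by rewrite size_map ?hsrc_size ?htgt_size.
Defined.

Lemma imE_imV e v : imE e -> (v \in hsrc e) || (v \in htgt e) -> imV v.
Proof.
case/existsP=> x /eqP <-; rewrite fsrc ftgt => /orP [] /mapP [w _ ->];
  by apply/existsP; exists w.
Qed.

Definition mark (b : bool) : hom S marked.
Proof.
refine (@Hom Sg S marked (fun v => (v, imV v || b)) (fun e => (e, imE e || b))
  _ _ _) => e //=; apply/eq_in_map => v Hv /=; case Fe: (imE e) => //=;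
  by rewrite (@imE_imV e v) ?Hv ?orbT.
Defined.

Lemma epic_surjective :
  (forall X (h h' : hom S X), heq (hcomp f h) (hcomp f h') -> heq h h') -> epi f.
Proof.
move=> Hepic.
have Hmark : heq (hcomp f (mark true)) (hcomp f (mark false)).
  by split=> x /=; rewrite orbT orbF; congr pair; apply/esym/existsP; exists x.
have [HV HE] := Hepic _ _ _ Hmark.
split=> y; [move: (HV y) | move: (HE y)] => /= -[];
  by rewrite orbT orbF => /esym /existsP [x /eqP <-]; exists x.
Qed.

End EpicSurjective.

Section Colimits.
Variable Sg : signature.
Implicit Types A B C D G S X : hypergraph Sg.

Lemma coeq_epi G A S (f g : hom G A) (e : hom A S) : is_coeq f g e -> epi e.
Proof.
move=> [Hc Hu]; apply: epic_surjective => X h h' Hhh'.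
have [h0 [_ Hh0]] := Hu X (hcomp e h) (heq_compr h Hc).
exact: heq_trans (heq_sym (Hh0 h (heq_refl _))) (Hh0 h' (heq_sym Hhh')).
Qed.

Lemma pushout_epi A B C D (a : hom A B) (b : hom A C) (c : hom B D) (d : hom C D) :
  is_pushout a b c d -> epi (copair c d).
Proof.
move=> [Hc Hu]; apply: epic_surjective => X h h' [HV HE].
have Hc' : heq (hcomp c h') (hcomp c h).
  by split=> x; [exact: esym (HV (inl x)) | exact: esym (HE (inl x))].
have Hd' : heq (hcomp d h') (hcomp d h).
  by split=> x; [exact: esym (HV (inr x)) | exact: esym (HE (inr x))].
have [h0 [_ _ Hh0]] := Hu X (hcomp c h) (hcomp d h) (heq_compr h Hc).
exact: heq_trans (heq_sym (Hh0 h (heq_refl _) (heq_refl _))) (Hh0 h' Hc' Hd').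
Qed.

Section Glue.
Variables (A B C : hypergraph Sg) (a : hom A B) (b : hom A C).

(* [C] with the hyperedges of [B] added, the nodes of [B] in the image of [a]
   being identified with their counterparts in [C]: the pushout of [a] and [b]
   when [A] is discrete and [a] injective. *)
Definition glue_node (v : hV B) : hV C + hV B :=
  if [pick k | fV a k == v] is Some k then inl (fV b k) else inr v.

Definition glue : hypergraph Sg.
Proof.
refine (@Hypergraph Sg (hV C + hV B)%type (hE C + hE B)%type
  (fun e => match e with inl e => map inl (hsrc e) | inr e => map glue_node (hsrc e) end)
  (fun e => match e with inl e => map inl (htgt e) | inr e => map glue_node (htgt e) end)
  (fun e => match e with inl e => hlab e | inr e => hlab e end) _ _);
  by case=> e; rewrite size_map ?hsrc_size ?htgt_size.
Defined.

Definition glue_l : hom B glue.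
Proof. by refine (@Hom Sg B glue glue_node inr _ _ _). Defined.

Definition glue_r : hom C glue.
Proof. by refine (@Hom Sg C glue inl inl _ _ _). Defined.

Lemma glue_comm :
  injective (fV a) -> discrete A -> heq (hcomp a glue_l) (hcomp b glue_r).
Proof.
move=> Ha HA; split=> x /=; last by case: (discrete_edge HA x).
rewrite /glue_node; case: pickP => [k /eqP /Ha -> // | Hnone].
by have := Hnone x; rewrite eqxx.
Qed.

End Glue.

Lemma pushout_mono A B C D (a : hom A B) (b : hom A C) (c : hom B D) (d : hom C D) :
  is_pushout a b c d -> injective (fV a) -> discrete A -> mono d.
Proof.
move=> [_ Hu] Ha HA.
have [h [_ [HV HE] _]] := Hu _ _ _ (glue_comm b Ha HA).
split=> x y Hxy; [move: (HV x) (HV y) | move: (HE x) (HE y)];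
  by rewrite /= Hxy => -> [].
Qed.

End Colimits.

Section Separation.
Variable Sg : signature.
Implicit Types A B C D G S : hypergraph Sg.

(* A morphism into [edge_tagged S] is a morphism into [S] together with a
   boolean tag on hyperedges; hyperedges with different tags cannot be
   identified by anything the tagged morphism factors through. *)
Definition edge_tagged S : hypergraph Sg.
Proof.
refine (@Hypergraph Sg (hV S) (hE S * bool)%type (fun e => hsrc e.1)
  (fun e => htgt e.1) (fun e => hlab e.1) _ _) => e;
  [exact: hsrc_size | exact: htgt_size].
Defined.

Definition tag_hom A S (f : hom A S) (t : hE A -> bool) : hom A (edge_tagged S).
Proof.
by refine (@Hom Sg A (edge_tagged S) (fV f) (fun e => (fE f e, t e)) _ _ _) => e /=;
  [exact: fsrc | exact: ftgt | exact: flab].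
Defined.

Lemma tag_hom_factor_eq A A' S (f : hom A S) (f' : hom A' S) t t'
    (h : hom S (edge_tagged S)) x x' :
  heq (hcomp f h) (tag_hom f t) -> heq (hcomp f' h) (tag_hom f' t') ->
  fE f x = fE f' x' -> t x = t' x'.
Proof. by move=> [_ Hh] [_ Hh'] Hx; move: (Hh x) (Hh' x'); rewrite /= Hx => -> []. Qed.

Lemma coeq_tag_eq G A S (g1 g2 : hom G A) (e : hom A S) (t : hE A -> bool) x x' :
  is_coeq g1 g2 e -> (forall y, t (fE g1 y) = t (fE g2 y)) ->
  fE e x = fE e x' -> t x = t x'.
Proof.
move=> [[HV HE] Hu] Ht Hx.
have Htag : heq (hcomp g1 (tag_hom e t)) (hcomp g2 (tag_hom e t)).
  by split=> y /=; [move: (HV y) | move: (HE y); rewrite Ht] => /= ->.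
have [h [Hfac _]] := Hu _ _ Htag.
exact: (tag_hom_factor_eq Hfac Hfac Hx).
Qed.

Lemma pushout_edges_disjoint A B C D (a : hom A B) (b : hom A C) (c : hom B D)
    (d : hom C D) x y :
  is_pushout a b c d -> discrete A -> fE c x <> fE d y.
Proof.
move=> [[HV _] Hu] HA Hxy.
have Htag : heq (hcomp a (tag_hom c xpredT)) (hcomp b (tag_hom d xpred0)).
  by split=> z /=; [exact: HV | case: (discrete_edge HA z)].
have [h [Hc Hd _]] := Hu _ _ _ Htag.
by have := tag_hom_factor_eq Hc Hd Hxy.
Qed.

Lemma coeq_glued_eq G A S (g1 g2 : hom G A) (e : hom A S) x x' :
  is_coeq g1 g2 e -> glued_E g1 g2 x x' -> fE e x = fE e x'.
Proof. by move=> [[_ HE] _] [y [<- <-]]; exact: HE. Qed.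

Lemma coeq_unglued_sides G L1 L2 S (g1 g2 : hom G (hcoprod L1 L2))
    (e : hom (hcoprod L1 L2) S) (e1 : hE L1) (e2 : hE L2) :
  is_coeq g1 g2 e ->
  ~ (exists e1 e2,
       glued_E g1 g2 (inl e1) (inr e2) \/ glued_E g1 g2 (inr e2) (inl e1)) ->
  fE e (inl e1) <> fE e (inr e2).
Proof.
move=> He Hunglued Heq.
have Hside y : is_inl (fE g1 y) = is_inl (fE g2 y).
  case E1: (fE g1 y) => [x1|x1]; case E2: (fE g2 y) => [x2|x2] //; case: Hunglued.
  - by exists x1, x2; left; exists y.
  - by exists x2, x1; right; exists y.
by have := coeq_tag_eq He Hside Heq.
Qed.

End Separation.

Section Complement.
Variable Sg : signature.
Implicit Types C L S : hypergraph Sg.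

Lemma lift_along_injective C L S (c : hom C S) (m : hom L S) :
  injective (fV c) -> (forall v, exists x, fV c x = fV m v) ->
  (forall e, exists x, fE c x = fE m e) -> exists g : hom L C, heq (hcomp g c) m.
Proof.
move=> Hc /fin_all_exists [gV HV] /fin_all_exists [gE HE].
have Hsrc e : hsrc (gE e) = map gV (hsrc e).
  by apply: (inj_map Hc); rewrite -fsrc HE fsrc -map_comp; apply: eq_map => v /=.
have Htgt e : htgt (gE e) = map gV (htgt e).
  by apply: (inj_map Hc); rewrite -ftgt HE ftgt -map_comp; apply: eq_map => v /=.
have Hlab e : hlab (gE e) = hlab e by rewrite -(flab c) HE flab.
by exists (Hom Hsrc Htgt Hlab).
Qed.

Lemma ma_cospan_interior (I H O : hypergraph Sg) (i : hom I H) (o : hom O H)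
    (v : hV H) :
  ma_cospan i o -> (forall k, fV (copair i o) k <> v) ->
  [exists e, v \in htgt e] /\ [exists e, v \in hsrc e].
Proof.
move=> [_ [_ [_ [_ [_ [Hin Hout]]]]]] Hv.
rewrite -[[exists e, _ \in htgt e]]negbK -[[exists e, _ \in hsrc e]]negbK.
rewrite !negb_exists -indeg_eq0 -outdeg_eq0; split; apply/eqP.
- by move/Hin=> [x Hx]; apply: (Hv (inl x)).
- by move/Hout=> [x Hx]; apply: (Hv (inr x)).
Qed.

Lemma left_connected_rK (r : rule Sg) : left_connected_rule r -> discrete (rK r).
Proof. by move=> [HI [HO _]]; apply: discrete_coprod. Qed.

Lemma pushout_complement_factor (r : rule Sg) S (m : hom (rL r) S) C
    (k : hom (rK r) C) (c : hom C S) L (m' : hom L S) :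
  left_connected_rule r -> is_pushout (copair (riL r) (roL r)) k m c ->
  (forall s : hV S, indeg s <= 1 /\ outdeg s <= 1) -> strongly_connected L ->
  (forall e' e, fE m' e' <> fE m e) -> exists g : hom L C, heq (hcomp g c) m'.
Proof.
move=> Hr Hpo Hdeg HL Hdisj; have [_ [_ [Hcosp [_ [HKL _]]]]] := Hr.
have [[HkV _] _] := Hpo.
have [HpoV HpoE] := pushout_epi Hpo.
apply: lift_along_injective (pushout_mono Hpo HKL.1 (left_connected_rK Hr)).1 _ _.
- move=> v; have [[w|x] Hw] := HpoV (fV m' v); last by exists x.
  case: (boolP [exists k0, fV (copair (riL r) (roL r)) k0 == w]).
    case/existsP=> k0 /eqP Hk0; exists (fV k k0).
    by rewrite -Hw -Hk0; exact: esym (HkV k0).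
  rewrite negb_exists => /forallP Hint.
  have [/existsP [ei Hei] /existsP [eo Heo]] :=
    ma_cospan_interior Hcosp (fun k0 => elimN eqP (Hint k0)).
  (* [w] is interior, so its only incoming and outgoing hyperedges lie in the
     match, and every hyperedge of [m'] at [v] would have to be one of them. *)
  exfalso; case/orP: (strongly_connected_incident v HL) => /existsP [e' He'].
  + apply: (Hdisj e' ei); apply: (indeg_le1_tgt_eq (v := fV m' v) (Hdeg _).1).
      by rewrite ftgt map_f.
    by rewrite -Hw /= ftgt map_f.
  + apply: (Hdisj e' eo); apply: (outdeg_le1_src_eq (v := fV m' v) (Hdeg _).2).
      by rewrite fsrc map_f.
    by rewrite -Hw /= fsrc map_f.
- by move=> e'; have [[e|x] He] := HpoE (fE m' e'); [case: (Hdisj e' e) | exists x].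
Qed.

End Complement.

Lemma epi_copair_inj Sg (L1 L2 S : hypergraph Sg) (e : hom (hcoprod L1 L2) S) :
  epi e -> epi (copair (hcomp (inj1 L1 L2) e) (hcomp (inj2 L1 L2) e)).
Proof.
by move=> [HV HE]; split=> y; [have [[x|x] <-] := HV y | have [[x|x] <-] := HE y];
  [exists (inl x) | exists (inr x) | exists (inl x) | exists (inr x)].
Qed.

Theorem mainTheorem5 (Sg : signature) (Rs : seq (rule Sg)) (r1 r2 : rule Sg)
  (HRs : left_connected_system Rs) (Hr1 : List.In r1 Rs) (Hr2 : List.In r2 Rs)
  (G0 S : hypergraph Sg) (g1 g2 : hom G0 (hcoprod (rL r1) (rL r2)))
  (eps : hom (hcoprod (rL r1) (rL r2)) S)
  (Hcoeq : is_coeq g1 g2 eps)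
  (Hpre : yields_pre_critical eps)
  (D1 : derivation (@incl Sg S (@in_nodes Sg S)) (@incl Sg S (@out_nodes Sg S))
          (hcomp (inj1 (rL r1) (rL r2)) eps))
  (D2 : derivation (@incl Sg S (@in_nodes Sg S)) (@incl Sg S (@out_nodes Sg S))
          (hcomp (inj2 (rL r1) (rL r2)) eps))
  (HD1 : is_derivation D1) (HD2 : is_derivation D2) :
  critical_pair D1 D2 <->
  exists (e1 : hE (rL r1)) (e2 : hE (rL r2)),
    glued_E g1 g2 (inl e1) (inr e2) \/ glued_E g1 g2 (inr e2) (inl e1).
Proof.
have [Hr1c Hr2c] := (HRs _ Hr1, HRs _ Hr2).
have [_ _ HmaS] := Hpre; have [_ [_ [[_ HdegS] _]]] := HmaS.
have [[_ [Hpo1 _]] [_ [Hpo2 _]]] := (HD1, HD2).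
have [[_ [_ [_ [_ [_ HL1]]]]] [_ [_ [_ [_ [_ HL2]]]]]] := (Hr1c, Hr2c).
split.
- case=> _ Hnot_parallel; apply: NNPP => Hunglued; apply: Hnot_parallel.
  have Hsep := coeq_unglued_sides Hcoeq Hunglued.
  have [f1 Hf1] := pushout_complement_factor (m' := hcomp (inj1 _ _) eps)
    Hr2c Hpo2 HdegS HL1 (fun e1 e2 => Hsep e1 e2).
  have [f2 Hf2] := pushout_complement_factor (m' := hcomp (inj2 _ _) eps)
    Hr1c Hpo1 HdegS HL2 (fun e2 e1 He => Hsep e1 e2 (esym He)).
  by exists f1, f2.
- case=> e1 [e2 Hglued].
  have Heq : fE eps (inl e1) = fE eps (inr e2).
    by case: Hglued => /(coeq_glued_eq Hcoeq).
  split; first by split=> //; exact: epi_copair_inj (coeq_epi Hcoeq).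
  case=> f1 [_ [[_ Hf1] _]].
  apply: (pushout_edges_disjoint (x := e2) (y := fE f1 e1) Hpo2
    (left_connected_rK Hr2c)).
  by rewrite /= -Heq; exact: esym (Hf1 e1).
Qed.
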